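(* For deterministic algorithms, none of the following problems can be solved in time less than $\Omega(|G|)$: (1) given two Abelian groups $G$ and $H$, decide whether $G$ is isomorphic to $H$; (2) given an Abelian group $G$, find a basis for $G$; (3) given an Abelian group $G$, find generators for $G$ with relations of size at most $n^{o(1)}$, where $n=|G|$.
   Context: The algorithm accesses elements of the groups and queries their Cayley tables (products of pairs of elements), each access costing one unit of time. A basis of a finite Abelian group $G$ is a tuple $a_1,\ldots,a_t$ such that $G$ is the internal direct product of the nontrivial cyclic subgroups $\langle a_1\rangle,\ldots,\langle a_t\rangle$. Relations for generators are equations between products of powers of the generators that together determine the group; their size is their total description length. *)

From mathcomp Require Import all_boot all_order all_algebra.
Set Implicit Arguments. Unset Strict Implicit. Unset Printing Implicit Defensive.
Import GRing.Theory Num.Theory.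

Definition table (n : nat) := 'I_n.+1 -> 'I_n.+1 -> 'I_n.+1.

Definition ab_table n (mul : table n) : Prop :=
  (forall x y z, mul x (mul y z) = mul (mul x y) z) /\
  (forall x y, mul x y = mul y x) /\
  exists e, (forall x, mul e x = x) /\ (forall x, exists y, mul x y = e).

Definition table_iso n m (G : table n) (H : table m) : Prop :=
  exists f : 'I_n.+1 -> 'I_m.+1,
    bijective f /\ forall x y, f (G x y) = H (f x) (f y).

Definition gid n (mul : table n) : 'I_n.+1 :=
  odflt ord0 [pick e | [forall x, mul e x == x]].

Fixpoint pw n (mul : table n) (x : 'I_n.+1) (k : nat) : 'I_n.+1 :=
  if k is k'.+1 then mul x (pw mul x k') else gid mul.

Definition gord n (mul : table n) (x : 'I_n.+1) : nat :=
  (find (fun k => pw mul x k.+1 == gid mul) (iota 0 n.+1)).+1.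

Definition zpow n (mul : table n) (x : 'I_n.+1) (z : int) : 'I_n.+1 :=
  pw mul x (absz (z %% (gord mul x)%:Z)%Z).

Definition prodpw n (mul : table n) (s : seq 'I_n.+1) (es : seq nat) : 'I_n.+1 :=
  foldr (fun p acc => mul (pw mul p.1 p.2) acc) (gid mul) (zip s es).

Definition zprod n (mul : table n) (s : seq 'I_n.+1) (v : seq int) : 'I_n.+1 :=
  foldr (fun p acc => mul (zpow mul p.1 p.2) acc) (gid mul) (zip s v).

Definition is_basis n (mul : table n) (s : seq 'I_n.+1) : Prop :=
  all (fun a => 1 < gord mul a) s /\
  forall x, exists! es : seq nat,
    [/\ size es = size s, all2 (fun e a => e < gord mul a) es s & prodpw mul s es = x].

(* Relations: an equation u = v between words; a word is a product of powers
   g_i^e of generators, written as a list of pairs (i, e). *)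
Definition word := seq (nat * int).
Definition relation := (word * word)%type.

Definition wvec (t : nat) (w : word) : seq int :=
  [seq (\sum_(p <- w | p.1 == j) p.2)%R | j <- iota 0 t].

Definition relvec (t : nat) (r : relation) : seq int :=
  [seq (ab.1 - ab.2)%R | ab <- zip (wvec t r.1) (wvec t r.2)].

Definition lincomb (t : nat) (cs : seq int) (vs : seq (seq int)) : seq int :=
  [seq (\sum_(k < size vs) cs`_k * nth 0 (nth [::] vs k) j)%R | j <- iota 0 t].

(* gens with rels is a presentation of G (as an Abelian group): the gens
   generate G, and an integer relation among the gens holds in G iff it is
   a consequence of rels, i.e. G = Z^t / <rels> via the gens. *)
Definition presents n (mul : table n) (gens : seq 'I_n.+1) (rels : seq relation) : Prop :=
  let t := size gens in
  all (fun r => all (fun p => p.1 < t) (r.1 ++ r.2)) rels /\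
  (forall x, exists v : seq int, size v = t /\ zprod mul gens v = x) /\
  (forall v : seq int, size v = t ->
     (zprod mul gens v = gid mul <->
      exists cs : seq int, size cs = size rels /\ v = lincomb t cs (map (relvec t) rels))).

(* description length of relations (binary encoding of indices/exponents) *)
Definition bitlen (k : nat) : nat := (trunc_log 2 k).+1.
Definition rsize (rels : seq relation) : nat :=
  \sum_(r <- rels) \sum_(p <- r.1 ++ r.2) (1 + bitlen p.1 + bitlen (absz p.2)).

(* Deterministic query algorithms = adaptive decision trees. *)
Inductive dtree (Q A O : Type) : Type :=
| Leaf of O
| Node of Q & (A -> dtree Q A O).
Arguments Leaf {Q A O}.
Arguments Node {Q A O}.

Fixpoint run (Q A O : Type) (orc : Q -> A) (t : dtree Q A O) : O * nat :=
  match t with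
  | Leaf o => (o, 0)
  | Node q k => let r := run orc (k (orc q)) in (r.1, r.2.+1)
  end.

Definition q1 (n : nat) := ('I_n.+1 * 'I_n.+1)%type.
Definition orc1 n (G : table n) (q : q1 n) : 'I_n.+1 := G q.1 q.2.
Definition q2 (n m : nat) := (q1 n + q1 m)%type.
Definition orc2 n m (G : table n) (H : table m) (q : q2 n m) : nat :=
  match q with inl q => val (G q.1 q.2) | inr q => val (H q.1 q.2) end.

(* f(n) = n^{o(1)}: for every k > 0, eventually f(n)^k <= n *)
Definition subpoly (f : nat -> nat) : Prop :=
  forall k, 0 < k -> exists N, forall n, N <= n -> f n ^ k <= n.

(* Adversary argument.  The adversary answers Cayley-table queries by lazily
   labelling elements of the cyclic factor Z_M, M = 8j + 1, of a group of
   order 4M; each query fixes at most three labels.  After j queries the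
   revealed partial table extends both to Z_M * Z_2 * Z_2 and to Z_M * Z_4,
   which are not isomorphic because M is odd (2M kills only the first), so an
   isomorphism test must ask more than j queries.  An algorithm that stops
   within j queries with at most 5j generators fails as well: labelling those
   generators inside Z_M too, they generate only Z_M * 0 in a group consistent
   with every answer.  A basis of a group of order n has at most log n
   elements, and relations of total size n^o(1) mention at most n^o(1)
   generators, so both outputs are that short. *)

From HB Require Import structures.
From mathcomp Require Import all_boot all_order all_algebra zify.
Set Implicit Arguments. Unset Strict Implicit. Unset Printing Implicit Defensive.
Import GRing.Theory.
HB.saturate prod.

Lemma eq_run (Q A O : Type) (o1 o2 : Q -> A) (t : dtree Q A O) :
  o1 =1 o2 -> run o1 t = run o2 t.
Proof. by move=> eq_o; elim: t => [//|q k IHk] /=; rewrite eq_o IHk. Qed.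

Section Tables.
Variables (n : nat) (T : table n).

Definition generates (s : seq 'I_n.+1) := forall x, exists v : seq int, zprod T s v = x.

Lemma gidP : ab_table T -> forall x, T (gid T) x = x.
Proof.
case=> _ [_ [e [eP _]]] x; rewrite /gid; case: pickP => [e' /forallP/(_ x)/eqP //|].
by move/(_ e)/forallP; case=> y; rewrite eP.
Qed.

Lemma zprod_closed (P : pred 'I_n.+1) s v :
  P (gid T) -> {in P &, forall x y, P (T x y)} -> all P s -> P (zprod T s v).
Proof.
move=> P1 PM; have Ppw x k : P x -> P (pw T x k) by move=> Px; elim: k => //= k; apply: PM.
elim: s v => [|x s IHs] [|z v] //= /andP[Px Ps].
by apply: PM; [apply: Ppw | apply: IHs].
Qed.

Lemma basis_generates s : is_basis T s -> generates s.
Proof.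
case=> _ basisT x; have [es [[size_es lt_es <-] _]] := basisT x.
exists (map Posz es); elim: s es size_es lt_es {basisT} => [|a s IHs] [|e es] //= [size_es].
case/andP=> lt_e lt_es; congr (T _ _); last exact: IHs.
by rewrite /zpow modz_nat modn_small.
Qed.

(* The 2 ^ size s products with exponents in {0, 1} are pairwise distinct. *)
Lemma basis_size s : is_basis T s -> 2 ^ size s <= n.+1.
Proof.
case=> ord_gt1 basisT.
pose F (b : (size s).-tuple bool) := prodpw T s (map nat_of_bool b).
have bits_lt (b : seq bool) : size b = size s ->
    all2 (fun e a => e < gord T a) (map nat_of_bool b) s.
  elim: s b ord_gt1 {F basisT} => [|a s IHs] [|c b] //= /andP[gt1 ?] [?].
  by rewrite IHs // andbT; case: c; lia.
have bits_ok (b : (size s).-tuple bool) :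
    [/\ size (map nat_of_bool b) = size s,
        all2 (fun e a => e < gord T a) (map nat_of_bool b) s
      & prodpw T s (map nat_of_bool b) = F b].
  by split; rewrite ?size_map ?bits_lt ?size_tuple.
have injF : injective F.
  move=> b1 b2 eqF; have [es [_ uniq_es]] := basisT (F b1).
  have es_b1 := uniq_es _ (bits_ok b1).
  have es_b2 : es = map nat_of_bool b2 by apply: uniq_es; rewrite eqF; apply: bits_ok.
  by apply/val_inj/(@inj_map _ _ nat_of_bool); [do 2 case | rewrite /= -es_b1 -es_b2].
by have := leq_card F injF; rewrite card_tuple card_bool card_ord.
Qed.

Lemma presents_generates gens rels : presents T gens rels -> generates gens.
Proof. by case=> _ [genP _] x; have [v [_ <-]] := genP x; exists v. Qed.
End Tables.

Definition rel_indices (rels : seq relation) : seq nat :=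
  flatten [seq [seq p.1 | p <- r.1 ++ r.2] | r <- rels].

Lemma size_rel_indices rels : size (rel_indices rels) <= rsize rels.
Proof.
rewrite /rsize; elim: rels => [|r rels IHrels]; rewrite ?big_nil // big_cons size_cat.
by rewrite leq_add // size_map -sum1_size leq_sum // => p _; lia.
Qed.

Lemma lincomb_support t cs vs i : i < t ->
  nth 0%R (lincomb t cs vs) i != 0%R -> exists2 w, w \in vs & nth 0%R w i != 0%R.
Proof.
move=> lt_it; rewrite (nth_map 0) ?size_iota // nth_iota // add0n.
case: (pickP (fun k : 'I_(size vs) => nth 0%R (nth [::] vs k) i != 0%R)) => [k nz_k|none].
  by exists (nth [::] vs k); rewrite ?mem_nth.
by rewrite big1 ?eqxx // => k _; move/negbFE/eqP: (none k) => ->; rewrite mulr0.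
Qed.

Lemma relvec_support t r i : i < t ->
  nth 0%R (relvec t r) i != 0%R -> i \in [seq p.1 | p <- r.1 ++ r.2].
Proof.
move=> lt_it; have size_w w : size (wvec t w) = t by rewrite size_map size_iota.
have nth_w w : nth 0%R (wvec t w) i = (\sum_(p <- w | p.1 == i) p.2)%R.
  by rewrite (nth_map 0) ?size_iota // nth_iota.
rewrite (nth_map (0, 0)%R) ?size_zip ?size_w ?minnn // nth_zip ?size_w //= !nth_w.
apply: contraR; rewrite map_cat mem_cat negb_or => /andP[r1_i r2_i].
have no_i (w : word) : i \notin [seq p.1 | p <- w] -> (\sum_(p <- w | p.1 == i) p.2 = 0)%R.
  move=> w_i; rewrite big_hasC //; apply: contra w_i => /hasP[p p_w /eqP <-].
  exact: map_f.
by rewrite !no_i ?subrr.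
Qed.

Section Presentations.
Variables (n : nat) (T : table n).
Hypothesis abT : ab_table T.

(* The relation g_i^(ord g_i) = 1 holds, hence is a combination of [rels]. *)
Lemma presents_index gens rels i :
  presents T gens rels -> i < size gens -> i \in rel_indices rels.
Proof.
case=> _ [_ relsP] lt_i; set t := size gens; set g := nth ord0 gens i.
pose v : seq int := [seq if k == i then Posz (gord T g) else 0%R | k <- iota 0 t].
have size_v : size v = t by rewrite size_map size_iota.
have v_trivial : zprod T gens v = gid T.
  rewrite /zprod -[in zip gens _](mkseq_nth ord0 gens) /mkseq /v zip_map.
  elim: (iota 0 t) => //= k ks ->.
  by case: eqP => [->|_]; rewrite /zpow ?modzz ?mod0z /= gidP.
have [cs [_ v_comb]] := (relsP v size_v).1 v_trivial.
have nz : nth 0%R (lincomb t cs (map (relvec t) rels)) i != 0%R.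
  by rewrite -v_comb (nth_map 0) ?size_iota // nth_iota // add0n eqxx.
have [w /mapP[r r_rels ->] nz_r] := lincomb_support lt_i nz.
apply/flattenP; exists [seq p.1 | p <- r.1 ++ r.2]; first exact: map_f.
exact: relvec_support nz_r.
Qed.

Lemma presents_size gens rels : presents T gens rels -> size gens <= rsize rels.
Proof.
move=> presT; apply: leq_trans (size_rel_indices rels).
rewrite -(size_iota 0 (size gens)); apply: uniq_leq_size (iota_uniq _ _) _ => i.
by rewrite mem_iota => /(presents_index presT).
Qed.
End Presentations.

Section Transfer.
Local Open Scope ring_scope.
Variables (n : nat) (V : zmodType) (pi : 'I_n.+1 -> V) (pii : V -> 'I_n.+1).
Hypotheses (piK : cancel pi pii) (piiK : cancel pii pi).

Definition transfer : table n := fun x y => pii (pi x + pi y).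

Lemma pi_transfer x y : pi (transfer x y) = pi x + pi y.
Proof. exact: piiK. Qed.

Lemma transfer_ab : ab_table transfer.
Proof.
split=> [x y z|]; first by rewrite /transfer !piiK addrA.
split=> [x y|]; first by rewrite /transfer addrC.
exists (pii 0); split=> [x|x]; first by rewrite /transfer piiK add0r piK.
by exists (pii (- pi x)); rewrite /transfer piiK subrr.
Qed.

Lemma pi_gid_transfer : pi (gid transfer) = 0.
Proof.
apply: (@addIr _ (pi (pii 0))); rewrite -pi_transfer gidP ?add0r //.
exact: transfer_ab.
Qed.

Lemma transfer_generates_closed (P : pred V) xs :
  P 0 -> {in P &, forall a b, P (a + b)} -> all (P \o pi) xs ->
  generates transfer xs -> forall a, P a.
Proof.
move=> P0 PD P_xs gen_xs a; have [v /(congr1 pi)] := gen_xs (pii a); rewrite piiK => <-.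
apply: (zprod_closed (P := P \o pi)) => //= [|x y Px Py]; first by rewrite pi_gid_transfer.
by rewrite pi_transfer PD.
Qed.
End Transfer.

Section TransferIso.
Local Open Scope ring_scope.

Lemma transfer_iso (V : zmodType) n m (pi1 : 'I_n.+1 -> V) pii1 (pi2 : 'I_m.+1 -> V) pii2 :
  cancel pi1 pii1 -> cancel pii1 pi1 -> cancel pi2 pii2 -> cancel pii2 pi2 ->
  table_iso (transfer pi1 pii1) (transfer pi2 pii2).
Proof.
move=> pi1K pii1K pi2K pii2K; exists (pii2 \o pi1); split.
  by exists (pii1 \o pi2) => x /=; rewrite ?pi2K ?pi1K ?pii2K ?pii1K.
by move=> x y; rewrite /transfer /= !pii2K pii1K.
Qed.

Lemma transfer_iso_exponent (V W : zmodType) n m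
    (piV : 'I_n.+1 -> V) piiV (piW : 'I_m.+1 -> W) piiW k :
  cancel piV piiV -> cancel piiV piV -> cancel piW piiW -> cancel piiW piW ->
  table_iso (transfer piV piiV) (transfer piW piiW) ->
  (forall a : V, a *+ k = 0) -> forall b : W, b *+ k = 0.
Proof.
move=> piVK piiVK piWK piiWK [f [[fi fK fiK] fM]] expV b.
pose g a := piW (f (piiV a)).
have gD : {morph g : a1 a2 / (a1 + a2)}.
  move=> a1 a2; rewrite /g.
  have -> : piiV (a1 + a2) = transfer piV piiV (piiV a1) (piiV a2) by rewrite /transfer !piiVK.
  by rewrite fM pi_transfer.
have g0 : g 0 = 0 by apply: (@addIr _ (g 0)); rewrite -gD !add0r.
have gMn a : g (a *+ k) = g a *+ k.
  by elim: k {expV} => [|j IHj]; rewrite ?mulr0n // !mulrS gD IHj.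
have <- : g (piV (fi (piiW b))) = b by rewrite /g piVK fiK piiWK.
by rewrite -gMn expV.
Qed.
End TransferIso.

Lemma exists_notin (X : finType) (s : seq X) : size s < #|X| -> exists x, x \notin s.
Proof.
move=> lt_s; apply/existsP; rewrite -negb_forall; apply: contraL lt_s => /forallP all_s.
rewrite -leqNgt; apply: leq_trans (card_size s); apply: subset_leq_card.
by apply/subsetP => x _; rewrite all_s.
Qed.

Definition fresh (X : finType) (d : X) (s : seq X) : X := odflt d [pick x | x \notin s].

Lemma fresh_notin (X : finType) (d : X) (s : seq X) : size s < #|X| -> fresh d s \notin s.
Proof.
move=> /exists_notin[x x_s]; rewrite /fresh.
by case: pickP => [y -> //|none]; rewrite none in x_s.
Qed.

Lemma partial_bij_extend (X Y : finType) (y0 : Y) (s : seq (X * Y)) :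
  uniq (map fst s) -> uniq (map snd s) -> #|X| = #|Y| ->
  exists2 g : X -> Y, bijective g & {in s, forall p, g p.1 = p.2}.
Proof.
move=> + + cardXY; move def_k: (#|X| - size s) => k.
elim: k s def_k => [|k IHk] s def_k uniq1 uniq2; last first.
  have lt_s : size s < #|X| by rewrite -subn_gt0 def_k.
  have [x x_s] : exists x, x \notin map fst s by apply: exists_notin; rewrite size_map.
  have [y y_s] : exists y, y \notin map snd s by apply: exists_notin; rewrite size_map -cardXY.
  have [|||g bij_g gP] := IHk ((x, y) :: s); rewrite /= ?x_s ?y_s ?subnS ?def_k //.
  by exists g => // p s_p; apply: gP; rewrite inE s_p orbT.
have fst_s x : x \in map fst s.
  apply: contraT => x_s; have := max_card (mem (x :: map fst s)).
  by rewrite (card_uniqP _) /= ?x_s // size_map -subn_gt0 def_k.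
pose g x := nth y0 (map snd s) (index x (map fst s)).
have index_lt x : index x (map fst s) < size (map snd s).
  by rewrite size_map -(size_map fst) index_mem.
exists g => [|p s_p].
  apply: inj_card_bij; last by rewrite cardXY.
  move=> x1 x2 /eqP; rewrite /g nth_uniq // => /eqP eq_index.
  by rewrite -(nth_index x1 (fst_s x1)) eq_index nth_index.
have lt_p : index p s < size s by rewrite index_mem.
have p1 : nth p.1 (map fst s) (index p s) = p.1 by rewrite (nth_map p) // nth_index.
by rewrite /g -{1}p1 index_uniq ?size_map // (nth_map p) // nth_index.
Qed.

Section Adversary.
Local Open Scope ring_scope.
Variables (L : finType) (H : finZmodType).
Implicit Types (s : seq (L * H)) (x y : L).

Definition partial_bij s := uniq (map fst s) && uniq (map snd s).

Definition value_of s x : H := nth 0 (map snd s) (index x (map fst s)).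

Definition label_of s (d : L) (z : H) : L := nth d (map fst s) (index z (map snd s)).

Definition assign s x := if x \in map fst s then s else (x, fresh 0 (map snd s)) :: s.

Definition answer s x y : seq (L * H) * L :=
  let s2 := assign (assign s x) y in
  let z := value_of s2 x + value_of s2 y in
  if z \in map snd s2 then (s2, label_of s2 x z)
  else let l := fresh x (map fst s2) in ((l, z) :: s2, l).

Lemma value_of_mem s x : x \in map fst s -> (x, value_of s x) \in s.
Proof.
move=> s_x; have lt_x : (index x (map fst s) < size s)%N by rewrite -(size_map fst) index_mem.
rewrite /value_of (nth_map (x, 0)) // -[x in (x, _)](nth_index x s_x) (nth_map (x, 0)) //.
by rewrite -surjective_pairing mem_nth.
Qed.

Lemma label_of_mem s d z : z \in map snd s -> (label_of s d z, z) \in s.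
Proof.
move=> s_z; have lt_z : (index z (map snd s) < size s)%N by rewrite -(size_map snd) index_mem.
rewrite /label_of (nth_map (d, z)) // -[z in (_, z)](nth_index z s_z) (nth_map (d, z)) //.
by rewrite -surjective_pairing mem_nth.
Qed.

Lemma assignP s x : partial_bij s -> (size s < #|H|)%N ->
  [/\ partial_bij (assign s x), {subset s <= assign s x},
      (size (assign s x) <= (size s).+1)%N & x \in map fst (assign s x)].
Proof.
case/andP=> uniq1 uniq2 lt_s; rewrite /assign; case: ifP => [s_x|/negbT s_x].
  by split=> //; rewrite /partial_bij uniq1 uniq2.
split=> [||//|]; last by rewrite inE eqxx.
  by rewrite /partial_bij /= s_x uniq1 uniq2 fresh_notin ?size_map.
by move=> p s_p; rewrite inE s_p orbT.
Qed.

Definition assign_all s xs := foldl assign s xs.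

Lemma assign_allP s xs : partial_bij s -> (size s + size xs <= #|H|)%N ->
  [/\ partial_bij (assign_all s xs), {subset s <= assign_all s xs},
      (size (assign_all s xs) <= size s + size xs)%N & {subset xs <= map fst (assign_all s xs)}].
Proof.
elim: xs s => [|x xs IHxs] s bij_s; first by split; rewrite ?addn0.
rewrite [size (x :: xs)]/= => lt_s.
have -> : assign_all s (x :: xs) = assign_all (assign s x) xs by [].
have [bij1 sub1 size1 x1] := assignP x bij_s (ltac:(lia)).
have [bij2 sub2 size2 xs2] := IHxs _ bij1 (ltac:(lia)).
split=> [//|p /sub1/sub2 //||y]; first lia.
by rewrite inE => /predU1P[->|/xs2 //]; have [p /sub2 s_p x_p] := mapP x1; apply/mapP; exists p.
Qed.

Hypothesis card_HL : (#|H| <= #|L|)%N.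

Lemma answerP s x y : partial_bij s -> (size s + 3 <= #|H|)%N ->
  let r := answer s x y in
  [/\ partial_bij r.1, {subset s <= r.1}, (size r.1 <= size s + 3)%N &
      exists hx hy, [/\ (x, hx) \in r.1, (y, hy) \in r.1 & (r.2, hx + hy) \in r.1]].
Proof.
move=> bij_s lt_s.
have [bij1 sub1 size1 x1] := assignP x bij_s (ltac:(lia)).
have [bij2 sub2 size2 y2] := assignP y bij1 (ltac:(lia)).
rewrite /answer; set s2 := assign (assign s x) y in bij2 sub2 size2 y2 *.
have x2 : x \in map fst s2 by have [p /sub2 s2_p ->] := mapP x1; apply: map_f.
have sub : {subset s <= s2} by move=> p /sub1/sub2.
case: ifP => [s2_z|/negbT s2_z] /=.
  split=> //; first lia.
  by exists (value_of s2 x), (value_of s2 y); rewrite !value_of_mem ?label_of_mem.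
case/andP: bij2 => uniq1 uniq2; split.
- by rewrite /partial_bij /= s2_z uniq1 uniq2 fresh_notin ?size_map //; lia.
- by move=> p /sub s2_p; rewrite inE s2_p orbT.
- lia.
- by exists (value_of s2 x), (value_of s2 y); rewrite !inE !value_of_mem ?eqxx ?orbT.
Qed.

Definition consistent (T : L -> L -> L) s :=
  forall x y l hx hy, (x, hx) \in s -> (y, hy) \in s -> (l, hx + hy) \in s -> T x y = l.

Lemma sub_consistent T s s' : {subset s <= s'} -> consistent T s' -> consistent T s.
Proof. by move=> sub_s T_s' x y l hx hy /sub_s x_s /sub_s y_s /sub_s l_s; apply: T_s' l_s. Qed.

(* A query [q] asks either for the product of two labels in the adversary's
   table ([hidden q = Some (x, y)], answered by [encode]) or for something
   independent of that table ([known q]). *)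
Variables (Q A O : Type) (hidden : Q -> option (L * L)) (known : Q -> A) (encode : L -> A).

Definition oracle (T : L -> L -> L) (q : Q) : A :=
  if hidden q is Some xy then encode (T xy.1 xy.2) else known q.

Fixpoint adversary (k : nat) s (t : dtree Q A O) : seq (L * H) * option O :=
  match t, k with
  | Leaf o, _ => (s, Some o)
  | Node _ _, 0 => (s, None)
  | Node q f, k'.+1 =>
    if hidden q is Some xy then
      let r := answer s xy.1 xy.2 in adversary k' r.1 (f (encode r.2))
    else adversary k' s (f (known q))
  end.

Lemma adversaryP k s t : partial_bij s -> (size s + 3 * k <= #|H|)%N ->
  let r := adversary k s t in
  [/\ partial_bij r.1, {subset s <= r.1}, (size r.1 <= size s + 3 * k)%N &
      forall T, consistent T r.1 ->
        if r.2 is Some o then (run (oracle T) t).1 = o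
        else (k <= (run (oracle T) t).2)%N].
Proof.
elim: k s t => [|k IHk] s [o|q f] bij_s lt_s /=; try by split=> //; lia.
rewrite /oracle; case: (hidden q) => [xy|].
  have [bij1 sub1 size1 [hx [hy [x1 y1 l1]]]] := answerP xy.1 xy.2 bij_s (ltac:(lia)).
  have [bij2 sub2 size2 runP] := IHk _ (f (encode (answer s xy.1 xy.2).2)) bij1 (ltac:(lia)).
  split=> [//|p /sub1/sub2 //|| T T_s]; first lia.
  rewrite (T_s _ _ _ _ _ (sub2 _ x1) (sub2 _ y1) (sub2 _ l1)).
  by case: (adversary _ _ _).2 (runP T T_s) => [o|] /=.
have [bij2 sub2 size2 runP] := IHk s (f (known q)) bij_s (ltac:(lia)).
split=> [//|//||T T_s]; first lia.
by case: (adversary _ _ _).2 (runP T T_s) => [o|] /=.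
Qed.
End Adversary.

Section Exponents.
Local Open Scope ring_scope.

Lemma Zp_mulrn_char p (x : 'Z_p) : (1 < p)%N -> x *+ p = 0.
Proof. by move=> p_gt1; rewrite -mulr_natr pchar_Zp // mulr0. Qed.

Variable M : nat.
Hypothesis M_gt1 : (1 < M)%N.

Lemma Zp_Z2xZ2_exponent (a : 'Z_M * ('Z_2 * 'Z_2)) : a *+ (2 * M) = 0.
Proof.
case: a => a [b c]; rewrite !pairMnE /=.
by rewrite mulnC !mulrnA Zp_mulrn_char // -!mulrnA mulnC !mulrnA !Zp_mulrn_char // !mul0rn.
Qed.
End Exponents.

Lemma Z4_not_exponent M : odd M -> (((0, 1) : 'Z_M * 'Z_4) *+ (2 * M) != 0)%R.
Proof.
move=> odd_M; rewrite pairMnE xpair_eqE negb_and; apply/orP; right.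
apply/eqP => /(congr1 val); rewrite Zp_mulrn /= (_ : (Zp_trunc 4).+2 = 4) //.
by rewrite -(odd_double_half M) odd_M -addnn add1n; lia.
Qed.

(* j queries label at most 3j elements and a short output at most 5j more, all
   in Z_(hard_M j); the labels are 'I_(hard_n j).+1, with (hard_n j).+1 = 4 * hard_M j. *)
Definition hard_M j := (8 * j).+1.
Definition hard_n j := 32 * j + 3.
Notation label j := 'I_(hard_n j).+1.

Lemma card_hard_M j : 0 < j -> #|'Z_(hard_M j)| = hard_M j.
Proof. by move=> j_gt0; rewrite card_ord Zp_cast /hard_M //; lia. Qed.

Lemma hard_n_lt_exp2 j : 0 < j -> (hard_n j).+1 < 2 ^ (5 * j).+1.
Proof.
rewrite /hard_n expnS expnM; elim: j => // [[|j] IHj] _ //.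
by rewrite expnS; lia.
Qed.

Lemma exp2_bound_hard_n j k : 0 < j -> 2 ^ k <= (hard_n j).+1 -> k <= 5 * j.
Proof.
move=> j_gt0 /leq_ltn_trans/(_ (hard_n_lt_exp2 j_gt0)).
by rewrite ltn_exp2l.
Qed.

Lemma sqr_bound_hard_n j k : 1 < j -> k ^ 2 <= (hard_n j).+1 -> k <= 5 * j.
Proof. by rewrite -mulnn /hard_n; nia. Qed.

Lemma hard_transfer j (K : finZmodType) (s : seq (label j * 'Z_(hard_M j))) :
  #|K| = 4 -> 0 < j -> partial_bij s ->
  exists (pi : label j -> 'Z_(hard_M j) * K) (pii : _ -> label j),
  [/\ cancel pi pii, cancel pii pi,
    forall l h, (l, h) \in s -> pi l = (h, 0%R) & consistent (transfer pi pii) s].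
Proof.
move=> card_K j_gt0 /andP[uniq1 uniq2].
have [|||pi [pii piK piiK] piP] := @partial_bij_extend _ ('Z_(hard_M j) * K)%type 0%R
    [seq (p.1, (p.2, 0%R)) | p <- s].
- by rewrite -map_comp.
- by rewrite -map_comp (map_comp (fun h => (h, 0%R)) snd) map_inj_uniq // => ? ? [].
- by rewrite card_prod card_K card_hard_M // card_ord /hard_n /hard_M; lia.
have pi_s l h : (l, h) \in s -> pi l = (h, 0%R).
  by move=> s_lh; apply: (piP (l, (h, 0%R))); apply: (map_f _ s_lh).
exists pi, pii; split=> // x y l hx hy /pi_s pi_x /pi_s pi_y /pi_s pi_l.
rewrite /transfer pi_x pi_y -[l]piK pi_l; congr pii; exact: (congr1 (pair _) (addr0 _)).
Qed.

Lemma card_Z2xZ2 : #|{: 'Z_2 * 'Z_2}| = 4.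
Proof. by rewrite card_prod card_ord. Qed.

Lemma card_Z4 : #|'Z_4| = 4.
Proof. exact: card_ord. Qed.

Lemma hard_adversary j Q A O (hidden : Q -> option (label j * label j)) known encode
    (t : dtree Q A O) : 0 < j ->
  let r := adversary hidden known encode j ([::] : seq (label j * 'Z_(hard_M j))) t in
  [/\ partial_bij r.1, size r.1 <= 3 * j &
      forall T, consistent T r.1 ->
        if r.2 is Some o then (run (oracle hidden known encode T) t).1 = o
        else j <= (run (oracle hidden known encode T) t).2].
Proof.
move=> j_gt0; have card_ZL : #|'Z_(hard_M j)| <= #|label j|.
  by rewrite card_hard_M // card_ord /hard_M /hard_n; lia.
have [|bij_r _ size_r runP] := adversaryP card_ZL hidden known encode (k := j) (s := [::]) t isT.
  by rewrite card_hard_M // /hard_M /=; lia.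
by split.
Qed.

Lemma iso_lower_bound j (t : dtree (q2 (hard_n j) (hard_n j)) nat bool) : 0 < j ->
  (forall G H : table (hard_n j), ab_table G -> ab_table H ->
     (run (orc2 G H) t).1 = true <-> table_iso G H) ->
  exists G H : table (hard_n j), [/\ ab_table G, ab_table H & j <= (run (orc2 G H) t).2].
Proof.
move=> j_gt0 tP.
have [pi0 [pii0 [pi0K pii0K _ _]]] := hard_transfer card_Z2xZ2 j_gt0 (isT : partial_bij [::]).
pose G := transfer pi0 pii0; have abG : ab_table G := transfer_ab pi0K pii0K.
pose hidden (q : q2 (hard_n j) (hard_n j)) : option (q1 (hard_n j)) :=
  if q is inr xy then Some xy else None.
pose known (q : q2 (hard_n j) (hard_n j)) := if q is inl xy then val (G xy.1 xy.2) else 0.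
have orcE T : oracle hidden known val T =1 orc2 G T by case.
have [bij_r _ runP] := hard_adversary hidden known val t j_gt0.
have [piA [piiA [piAK piiAK _ A_r]]] := hard_transfer card_Z2xZ2 j_gt0 bij_r.
have [piB [piiB [piBK piiBK _ B_r]]] := hard_transfer card_Z4 j_gt0 bij_r.
have abA := transfer_ab piAK piiAK; have abB := transfer_ab piBK piiBK.
move: (runP _ A_r) (runP _ B_r); rewrite !(eq_run _ (orcE _)).
case: (adversary _ _ _ _ _ _).2 => [o|] runA runB; last by exists G, (transfer piA piiA).
have GB : table_iso G (transfer piB piiB).
  by apply/(tP _ _ abG abB); rewrite runB -runA; apply/tP => //; apply: transfer_iso.
have M_gt1 : 1 < hard_M j by rewrite /hard_M; lia.
have := transfer_iso_exponent pi0K pii0K piBK piiBK GB (Zp_Z2xZ2_exponent M_gt1) (0, 1)%R.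
have odd_M : odd (hard_M j) by rewrite /hard_M /= oddM.
by move/eqP; rewrite (negbTE (Z4_not_exponent odd_M)).
Qed.

Lemma generators_lower_bound j O (gens : O -> seq (label j))
    (t : dtree (q1 (hard_n j)) (label j) O) : 0 < j ->
  (forall G : table (hard_n j), ab_table G ->
     let o := (run (orc1 G) t).1 in generates G (gens o) /\ size (gens o) <= 5 * j) ->
  exists G : table (hard_n j), ab_table G /\ j <= (run (orc1 G) t).2.
Proof.
move=> j_gt0 tP; pose known (q : q1 (hard_n j)) := q.1.
have orcE T : oracle Some known id T =1 orc1 T by [].
have [bij_r size_r runP] := hard_adversary Some known id t j_gt0.
set r := adversary _ _ _ _ _ _ in bij_r size_r runP.
have [piA [piiA [piAK piiAK _ A_r]]] := hard_transfer card_Z2xZ2 j_gt0 bij_r.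
move: (runP _ A_r); rewrite (eq_run _ (orcE _)).
case def_o: r.2 => [o|] runA; last by exists (transfer piA piiA); split=> //; apply: transfer_ab.
have [_] := tP _ (transfer_ab piAK piiAK); rewrite /= runA => size_o.
have [|bij_s sub_s _ gens_s] := assign_allP (xs := gens o) bij_r.
  by rewrite card_hard_M // /hard_M; apply: leq_trans (leq_add size_r size_o) _; lia.
have [pi [pii [piK piiK pi_s B_s]]] := hard_transfer card_Z2xZ2 j_gt0 bij_s.
have := runP _ (sub_consistent sub_s B_s); rewrite def_o (eq_run _ (orcE _)) => runB.
have [+ _] := tP _ (transfer_ab piK piiK); rewrite /= runB => genB.
suff: ((0, (1, 0)) : 'Z_(hard_M j) * ('Z_2 * 'Z_2))%R.2 == 0%R by [].
apply: (transfer_generates_closed piK piiK (P := fun a => a.2 == 0%R) _ _ _ genB) => //.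
- by move=> a b /eqP a0 /eqP b0; rewrite [_.2]/= a0 b0 addr0.
- by apply/allP => l /gens_s /mapP[[l' h] s_lh /= ->]; rewrite (pi_s _ _ s_lh).
Qed.

Theorem mainTheorem19 :
  (* (1) isomorphism testing *)
  (forall alg : forall n m : nat, dtree (q2 n m) nat bool,
     (forall n m (G : table n) (H : table m), ab_table G -> ab_table H ->
        ((run (orc2 G H) (alg n m)).1 = true <-> table_iso G H)) ->
     exists c : nat, 0 < c /\ forall N, exists n, N <= n /\
       exists m (G : table n) (H : table m),
         [/\ ab_table G, ab_table H & n.+1 <= c * (run (orc2 G H) (alg n m)).2]) /\
  (* (2) finding a basis *)
  (forall alg : forall n : nat, dtree (q1 n) 'I_n.+1 (seq 'I_n.+1),
     (forall n (G : table n), ab_table G -> is_basis G (run (orc1 G) (alg n)).1) ->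
     exists c : nat, 0 < c /\ forall N, exists n, N <= n /\
       exists G : table n, ab_table G /\ n.+1 <= c * (run (orc1 G) (alg n)).2) /\
  (* (3) generators with relations of size n^{o(1)} *)
  (forall f : nat -> nat, subpoly f ->
   forall alg : forall n : nat, dtree (q1 n) 'I_n.+1 (seq 'I_n.+1 * seq relation),
     (forall n (G : table n), ab_table G ->
        let out := (run (orc1 G) (alg n)).1 in
        presents G out.1 out.2 /\ rsize out.2 <= f n.+1) ->
     exists c : nat, 0 < c /\ forall N, exists n, N <= n /\
       exists G : table n, ab_table G /\ n.+1 <= c * (run (orc1 G) (alg n)).2).
Proof.
have linear_time j k : 0 < j -> j <= k -> (hard_n j).+1 <= 36 * k.
  by rewrite /hard_n; lia.
split; [|split].
- move=> alg algP; exists 36; split=> // N.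
  exists (hard_n N.+1); split; first by rewrite /hard_n; lia.
  have [G [H [abG abH slow]]] := iso_lower_bound (t := alg _ _) (ltn0Sn N) (algP _ _).
  by exists (hard_n N.+1), G, H; split=> //; apply: linear_time slow.
- move=> alg algP; exists 36; split=> // N.
  exists (hard_n N.+1); split; first by rewrite /hard_n; lia.
  have [G abG|G [abG slow]] := generators_lower_bound (gens := id) (t := alg _) (ltn0Sn N).
    have basisG := algP _ _ abG.
    by split; [apply: basis_generates | apply: exp2_bound_hard_n (basis_size basisG)].
  by exists G; split=> //; apply: linear_time slow.
- move=> f f_small alg algP; exists 36; split=> // N.
  have [N' f_le] := f_small 2 isT; pose j := (N + N').+2.
  exists (hard_n j); split; first by rewrite /hard_n /j; lia.
  have [G abG|G [abG slow]] := generators_lower_bound (gens := fst) (t := alg _) (isT : 0 < j).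
    have [presG rsizeG] := algP _ _ abG.
    split; first exact: presents_generates presG.
    apply: leq_trans (presents_size abG presG) _; apply: leq_trans rsizeG _.
    by apply: sqr_bound_hard_n; last apply: f_le; rewrite /hard_n /j; lia.
  by exists G; split=> //; apply: linear_time slow.
Qed.
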